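(* Let $a,b,c>0$ and set $M=\mathrm{e}^{B_2}\mathrm{e}^{B_1}$ with $B_1=\begin{bmatrix}-a&-b\\ c&0\end{bmatrix}$, $B_2=\begin{bmatrix}-a&b\\ -c&0\end{bmatrix}$. Write the characteristic polynomial of $M$ as $\lambda^2+\alpha\lambda+\beta$. Then $\beta=\mathrm{e}^{-2a}$ and, with $d=\sqrt{a^2-4bc}$ (a real or purely imaginary number) and provided $d\neq 0$, $$\alpha=-\frac{\mathrm{e}^{-a}\left(a^2\mathrm{e}^{d}+a^2\mathrm{e}^{-d}+2d^2-2a^2\right)}{d^2}.$$ Moreover, both eigenvalues of $M$ have modulus strictly less than $1$.
   Context: This applies to the flying capacitor model with $a=\frac{TR}{2L}$, $b=\frac{T}{2L}$, $c=\frac{T}{2C}$, in which case $M=\mathrm{e}^{\frac T2A_2}\mathrm{e}^{\frac T2A_1}$ for $A_1=\begin{bmatrix}-\frac RL & -\frac1L\\ \frac1C & 0\end{bmatrix}$, $A_2=\begin{bmatrix}-\frac RL & \frac1L\\ -\frac1C & 0\end{bmatrix}$. $\mathrm{e}^{B}$ denotes the matrix exponential. *)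

From Stdlib Require Import Reals Factorial.
Open Scope R_scope.

Record Mat2 := mk2 { e11 : R; e12 : R; e21 : R; e22 : R }.
Definition mI : Mat2 := mk2 1 0 0 1.
Definition mmul (A B : Mat2) : Mat2 :=
  mk2 (e11 A * e11 B + e12 A * e21 B) (e11 A * e12 B + e12 A * e22 B)
      (e21 A * e11 B + e22 A * e21 B) (e21 A * e12 B + e22 A * e22 B).
Fixpoint mpow (B : Mat2) (n : nat) : Mat2 :=
  match n with O => mI | S k => mmul B (mpow B k) end.

Definition exp_partial (f : Mat2 -> R) (B : Mat2) (n : nat) : R :=
  sum_f_R0 (fun k => f (mpow B k) / INR (fact k)) n.

Definition is_mexp (B E : Mat2) : Prop :=
  Un_cv (exp_partial e11 B) (e11 E) /\ Un_cv (exp_partial e12 B) (e12 E) /\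
  Un_cv (exp_partial e21 B) (e21 E) /\ Un_cv (exp_partial e22 B) (e22 E).

Definition det2 (M : Mat2) : R := e11 M * e22 M - e12 M * e21 M.
Definition charpoly (M : Mat2) (l : R) : R :=
  det2 (mk2 (l - e11 M) (- e12 M) (- e21 M) (l - e22 M)).

(* minimal complex numbers as pairs (re, im) *)
Definition Cplx : Type := (R * R)%type.
Definition RtoC (r : R) : Cplx := (r, 0).
Definition Cadd (z w : Cplx) : Cplx := (fst z + fst w, snd z + snd w).
Definition Copp (z : Cplx) : Cplx := (- fst z, - snd z).
Definition Csub (z w : Cplx) : Cplx := Cadd z (Copp w).
Definition Cmul (z w : Cplx) : Cplx :=
  (fst z * fst w - snd z * snd w, fst z * snd w + snd z * fst w).
Definition Cinv (z : Cplx) : Cplx :=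
  (fst z / (fst z ^ 2 + snd z ^ 2), - snd z / (fst z ^ 2 + snd z ^ 2)).
Definition Cexp (z : Cplx) : Cplx := (exp (fst z) * cos (snd z), exp (fst z) * sin (snd z)).
Definition Cmod (z : Cplx) : R := sqrt (fst z ^ 2 + snd z ^ 2).

Definition Csqrt_real (x : R) : Cplx :=
  if Rle_dec 0 x then (sqrt x, 0) else (0, sqrt (- x)).

Definition eigenvalue (M : Mat2) (z : Cplx) : Prop :=
  Csub (Cmul (Csub z (RtoC (e11 M))) (Csub z (RtoC (e22 M))))
       (RtoC (e12 M * e21 M)) = (0, 0).

Definition alpha_formula (a : R) (d : Cplx) : Cplx :=
  Copp (Cmul (RtoC (exp (- a)))
    (Cmul (Cadd (Cadd (Cadd (Cmul (RtoC (a ^ 2)) (Cexp d))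
                            (Cmul (RtoC (a ^ 2)) (Cexp (Copp d))))
                      (Cmul (RtoC 2) (Cmul d d)))
                (RtoC (- (2 * a ^ 2))))
          (Cinv (Cmul d d)))).

(* Write B_1 = -(a/2) I + N_1 and B_2 = -(a/2) I + N_2 with N_i traceless, so that
   N_i^2 = d I for d = a^2/4 - b c.  The exponential series then collapses (as a Cauchy
   product of the series of e^(-a/2) and of e^(N_i)) to
   e^(B_i) = e^(-a/2) (Ch d I + Sh d N_i), where Ch d, Sh d are cosh sqrt d and
   sinh sqrt d / sqrt d (cos and sin / id at sqrt (-d) when d < 0).  Since
   Ch^2 - d Sh^2 = 1, the product M has det M = e^(-2a) and
   tr M = e^(-a) (2 + a^2 Sh(d)^2), which gives beta and alpha.  Finally d < a^2/4 forces
   Sh(d)^2 < Sh(a^2/4)^2 = (e^a + e^(-a) - 2)/a^2, i.e. tr M < 1 + det M, and with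
   0 < det M < 1 Jury's criterion puts both eigenvalues inside the unit disk. *)

From Coquelicot Require Import Coquelicot.
From Stdlib Require Import Reals Factorial Lra Lia Psatz.
Open Scope R_scope.

Lemma is_pseries_R (a : nat -> R) (x l : R) :
  is_pseries a x l <-> is_series (fun k => x ^ k * a k) l.
Proof.
  unfold is_pseries; split; apply is_series_ext; intros n; rewrite <- pow_n_pow; reflexivity.
Qed.

(* [is_series_ext] with the pointwise equations stated in [R], so that [ring] applies to them. *)
Lemma is_series_ext_R (a b : nat -> R) (l : R) :
  (forall n, a n = b n) -> is_series a l -> is_series b l.
Proof. apply is_series_ext. Qed.

Lemma is_series_exp (x : R) : is_series (fun k => x ^ k / INR (fact k)) (exp x).
Proof.
  generalize (is_exp_Reals x); rewrite is_pseries_R.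
  apply is_series_ext; reflexivity.
Qed.

Lemma Rabs_pow_div_fact (d : R) (m k : nat) :
  Rabs (d ^ m / INR (fact k)) = Rabs d ^ m / INR (fact k).
Proof.
  rewrite Rabs_div by apply INR_fact_neq_0.
  rewrite <- RPow_abs, (Rabs_right (INR _)) by (apply Rle_ge, pos_INR). reflexivity.
Qed.

Lemma ex_series_Rabs_pow_div_fact (d : R) (f : nat -> nat) :
  (forall m, (m <= f m)%nat) -> ex_series (fun m => Rabs (d ^ m / INR (fact (f m)))).
Proof.
  intros Hf.
  apply (@ex_series_le R_AbsRing R_CompleteNormedModule _ (fun m => Rabs d ^ m / INR (fact m))).
  - intros m. change (norm _) with (Rabs (Rabs (d ^ m / INR (fact (f m))))).
    rewrite Rabs_Rabsolu, Rabs_pow_div_fact. unfold Rdiv.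
    apply Rmult_le_compat_l; [apply pow_le, Rabs_pos|].
    apply Rinv_le_contravar; [apply INR_fact_lt_0|]. apply le_INR, fact_le, Hf.
  - eexists. apply is_series_exp.
Qed.

Definition Ch (d : R) : R := Series (fun m => d ^ m / INR (fact (2 * m))).
Definition Sh (d : R) : R := Series (fun m => d ^ m / INR (fact (2 * m + 1))).

Lemma is_series_Ch (d : R) : is_series (fun m => d ^ m / INR (fact (2 * m))) (Ch d).
Proof.
  apply Series_correct, ex_series_Rabs, ex_series_Rabs_pow_div_fact. intros; lia.
Qed.

Lemma is_series_Sh (d : R) : is_series (fun m => d ^ m / INR (fact (2 * m + 1))) (Sh d).
Proof.
  apply Series_correct, ex_series_Rabs, ex_series_Rabs_pow_div_fact. intros; lia.
Qed.

Lemma exp_Ch_Sh (v : R) : exp v = Ch (v ^ 2) + v * Sh (v ^ 2).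
Proof.
  assert (H : is_pseries (fun n => / INR (fact n)) v (Ch (v ^ 2) + v * Sh (v ^ 2))).
  { apply is_pseries_odd_even; apply is_pseries_R.
    - eapply is_series_ext_R; [|apply is_series_Ch]. intros n; simpl; unfold Rdiv; ring.
    - eapply is_series_ext_R; [|apply is_series_Sh]. intros n; simpl; unfold Rdiv; ring. }
  apply is_pseries_unique in H. rewrite <- H.
  symmetry. apply is_pseries_unique, is_exp_Reals.
Qed.

Lemma exp_opp_Ch_Sh (v : R) : exp (- v) = Ch (v ^ 2) - v * Sh (v ^ 2).
Proof. rewrite exp_Ch_Sh. replace ((- v) ^ 2) with (v ^ 2) by ring. ring. Qed.

Lemma cos_Ch (w : R) : cos w = Ch (- w ^ 2).
Proof.
  unfold cos. destruct (exist_cos (Rsqr w)) as [l Hl]. unfold cos_in in Hl.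
  apply is_series_Reals in Hl. symmetry. apply is_series_unique.
  revert Hl. apply is_series_ext_R. intros n.
  unfold cos_n, Rsqr. replace (- w ^ 2) with (-1 * (w * w)) by ring.
  rewrite (Rpow_mult_distr (-1)). unfold Rdiv. ring.
Qed.

Lemma sin_Sh (w : R) : sin w = w * Sh (- w ^ 2).
Proof.
  unfold sin. destruct (exist_sin (Rsqr w)) as [l Hl]. unfold sin_in in Hl.
  apply is_series_Reals in Hl. f_equal. symmetry. apply is_series_unique.
  revert Hl. apply is_series_ext_R. intros n.
  unfold sin_n, Rsqr. replace (- w ^ 2) with (-1 * (w * w)) by ring.
  rewrite (Rpow_mult_distr (-1)). unfold Rdiv. ring.
Qed.

Lemma Ch_Sh_id (d : R) : Ch d ^ 2 - d * Sh d ^ 2 = 1.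
Proof.
  destruct (Rle_dec 0 d) as [Hd|Hd].
  - pose proof (sqrt_sqrt d Hd) as Hv. set (v := sqrt d) in Hv.
    pose proof (exp_plus v (- v)) as E.
    rewrite Rplus_opp_r, exp_0, exp_Ch_Sh, exp_opp_Ch_Sh in E.
    replace (v ^ 2) with d in E by (rewrite <- Hv; ring). nra.
  - assert (Hw : sqrt (- d) * sqrt (- d) = - d) by (apply sqrt_sqrt; lra).
    set (w := sqrt (- d)) in Hw.
    pose proof (sin2_cos2 w) as E. unfold Rsqr in E. rewrite cos_Ch, sin_Sh in E.
    replace (- w ^ 2) with d in E by (simpl; lra). nra.
Qed.

Lemma Sh_ge_1 (d : R) : 0 <= d -> 1 <= Sh d.
Proof.
  intros Hd.
  pose proof (sum_incr _ 0 _ (proj1 (is_series_Reals _ _) (is_series_Sh d))) as H.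
  simpl in H. replace (1 / 1) with 1 in H by field. apply H.
  intros m. apply Rdiv_le_0_compat; [apply pow_le, Hd | apply INR_fact_lt_0].
Qed.

Lemma Sh_lt (d1 d2 : R) : 0 <= d1 < d2 -> Sh d1 < Sh d2.
Proof.
  intros Hd.
  assert (H : is_series (fun m => d2 ^ m / INR (fact (2 * m + 1)) - d1 ^ m / INR (fact (2 * m + 1)))
                (Sh d2 - Sh d1)).
  { apply (@is_series_minus R_AbsRing R_NormedModule); [apply is_series_Sh | apply is_series_Sh]. }
  apply is_series_Reals in H.
  assert (Hpos : forall m, 0 <= d2 ^ m / INR (fact (2 * m + 1)) - d1 ^ m / INR (fact (2 * m + 1))).
  { intros m. apply Rge_le, Rge_minus, Rle_ge. unfold Rdiv. apply Rmult_le_compat_r.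
    - left. apply Rinv_0_lt_compat, INR_fact_lt_0.
    - apply pow_incr. lra. }
  pose proof (sum_incr _ 1 _ H Hpos) as Hsum. simpl in Hsum. lra.
Qed.

Lemma Rabs_sin_le (w : R) : 0 < w -> Rabs (sin w) <= w.
Proof.
  intros Hw. pose proof (sin_lt_x w Hw). apply Rabs_le. split; [|lra].
  destruct (Rle_dec 1 w); [pose proof (SIN_bound w); lra|].
  assert (0 <= sin w) by (apply sin_ge_0; pose proof PI2_1; lra). lra.
Qed.

Lemma Rabs_Sh_le_1 (d : R) : d < 0 -> Rabs (Sh d) <= 1.
Proof.
  intros Hd. assert (Hw : sqrt (- d) * sqrt (- d) = - d) by (apply sqrt_sqrt; lra).
  assert (Hw0 : 0 < sqrt (- d)) by (apply sqrt_lt_R0; lra).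
  set (w := sqrt (- d)) in Hw, Hw0.
  pose proof (Rabs_sin_le w Hw0) as H.
  rewrite sin_Sh, Rabs_mult, (Rabs_right w) in H by lra.
  replace (- w ^ 2) with d in H by (simpl; lra).
  apply (Rmult_le_reg_l w); lra.
Qed.

Lemma Sh_sqr_lt (d e : R) : d < e -> 0 < e -> Sh d ^ 2 < Sh e ^ 2.
Proof.
  intros Hde He. pose proof (Sh_ge_1 0 (Rle_refl 0)) as H0.
  pose proof (Sh_lt 0 e (conj (Rle_refl 0) He)) as H0e.
  destruct (Rle_dec 0 d) as [Hd|Hd].
  - pose proof (Sh_ge_1 d Hd). pose proof (Sh_lt d e (conj Hd Hde)). nra.
  - pose proof (Rabs_Sh_le_1 d (Rnot_le_lt _ _ Hd)) as H.
    rewrite <- (pow2_abs (Sh d)). pose proof (Rabs_pos (Sh d)). nra.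
Qed.

Lemma exp_add_opp_sub_2 (v : R) : exp v + exp (- v) - 2 = v ^ 2 * Sh ((v / 2) ^ 2) ^ 2.
Proof.
  set (A := v / 2).
  assert (E1 : exp v = exp A * exp A) by (rewrite <- exp_plus; unfold A; f_equal; field).
  assert (E2 : exp (- v) = exp (- A) * exp (- A))
    by (rewrite <- exp_plus; unfold A; f_equal; field).
  assert (E3 : exp A * exp (- A) = 1) by (rewrite <- exp_plus, Rplus_opp_r; apply exp_0).
  replace v with (2 * A) at 3 by (unfold A; field).
  rewrite E1, E2. pose proof (exp_Ch_Sh A). pose proof (exp_opp_Ch_Sh A). nra.
Qed.

(* [N ^ k / k! = fst (npow_coef d k) * I + snd (npow_coef d k) * N] whenever [N ^ 2 = d * I]. *)
Fixpoint npow_coef (d : R) (k : nat) : R * R :=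
  match k with
  | O => (1, 0)
  | S k => (d * snd (npow_coef d k) / INR (S k), fst (npow_coef d k) / INR (S k))
  end.

Definition ncoef_I (d : R) (k : nat) : R := fst (npow_coef d k).
Definition ncoef_N (d : R) (k : nat) : R := snd (npow_coef d k).

Lemma ncoef_I_S (d : R) (k : nat) : INR (S k) * ncoef_I d (S k) = d * ncoef_N d k.
Proof. unfold ncoef_I, ncoef_N; cbn [npow_coef fst snd]. field. apply not_0_INR. lia. Qed.

Lemma ncoef_N_S (d : R) (k : nat) : INR (S k) * ncoef_N d (S k) = ncoef_I d k.
Proof. unfold ncoef_I, ncoef_N; cbn [npow_coef fst snd]. field. apply not_0_INR. lia. Qed.

Lemma npow_coef_even_odd (d : R) (m : nat) :
  npow_coef d (2 * m) = (d ^ m / INR (fact (2 * m)), 0) /\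
  npow_coef d (2 * m + 1) = (0, d ^ m / INR (fact (2 * m + 1))).
Proof.
  induction m as [|m [IHe IHo]].
  - simpl. split; f_equal; field.
  - assert (Ee : npow_coef d (2 * S m) = (d ^ S m / INR (fact (2 * S m)), 0)).
    { replace (2 * S m)%nat with (S (2 * m + 1)) by lia.
      cbn [npow_coef]. rewrite IHo. cbn [fst snd].
      rewrite fact_simpl, mult_INR. f_equal; [|unfold Rdiv; ring].
      simpl pow. field. split; [apply INR_fact_neq_0 | apply not_0_INR; lia]. }
    split; [exact Ee|].
    replace (2 * S m + 1)%nat with (S (2 * S m)) by lia.
    cbn [npow_coef]. rewrite Ee. cbn [fst snd].
    rewrite (fact_simpl (2 * S m)), mult_INR. f_equal; [unfold Rdiv; ring|].
    field. split; [apply INR_fact_neq_0 | apply not_0_INR; lia].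
Qed.

Lemma is_series_zero : is_series (fun _ : nat => 0) 0.
Proof.
  apply is_series_Reals. intros eps Heps. exists 0%nat. intros n _.
  replace (sum_f_R0 (fun _ => 0) n) with 0; [rewrite R_dist_eq; exact Heps|].
  induction n; [reflexivity|]. rewrite tech5, <- IHn. ring.
Qed.

Lemma is_series_even_odd (c : nat -> R) (l0 l1 : R) :
  is_series (fun m => c (2 * m)%nat) l0 -> is_series (fun m => c (2 * m + 1)%nat) l1 ->
  is_series c (l0 + l1).
Proof.
  intros H0 H1.
  assert (H : is_pseries c 1 (l0 + 1 * l1)).
  { apply is_pseries_odd_even; apply is_pseries_R; rewrite pow1.
    - revert H0; apply is_series_ext_R; intros m. rewrite pow1; ring.
    - revert H1; apply is_series_ext_R; intros m. rewrite pow1; ring. }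
  apply is_pseries_R in H. rewrite Rmult_1_l in H.
  revert H; apply is_series_ext_R; intros m. rewrite pow1, Rmult_1_l; reflexivity.
Qed.

Lemma is_series_ncoef (d : R) : is_series (ncoef_I d) (Ch d) /\ is_series (ncoef_N d) (Sh d).
Proof.
  unfold ncoef_I, ncoef_N. split.
  - rewrite <- (Rplus_0_r (Ch d)). apply is_series_even_odd.
    + eapply is_series_ext_R; [|apply is_series_Ch].
      intros m. rewrite (proj1 (npow_coef_even_odd d m)). reflexivity.
    + eapply is_series_ext_R; [|apply is_series_zero].
      intros m. rewrite (proj2 (npow_coef_even_odd d m)). reflexivity.
  - rewrite <- (Rplus_0_l (Sh d)). apply is_series_even_odd.
    + eapply is_series_ext_R; [|apply is_series_zero].
      intros m. rewrite (proj1 (npow_coef_even_odd d m)). reflexivity.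
    + eapply is_series_ext_R; [|apply is_series_Sh].
      intros m. rewrite (proj2 (npow_coef_even_odd d m)). reflexivity.
Qed.

Lemma Rabs_ncoef (d : R) (k : nat) :
  Rabs (ncoef_I d k) = ncoef_I (Rabs d) k /\ Rabs (ncoef_N d k) = ncoef_N (Rabs d) k.
Proof.
  unfold ncoef_I, ncoef_N. destruct (Nat.Even_or_Odd k) as [[m ->]|[m ->]].
  - rewrite !(proj1 (npow_coef_even_odd _ m)). cbn [fst snd].
    rewrite Rabs_pow_div_fact, Rabs_R0. auto.
  - rewrite !(proj2 (npow_coef_even_odd _ m)). cbn [fst snd].
    rewrite Rabs_pow_div_fact, Rabs_R0. auto.
Qed.

Lemma ex_series_Rabs_ncoef (d : R) :
  ex_series (fun k => Rabs (ncoef_I d k)) /\ ex_series (fun k => Rabs (ncoef_N d k)).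
Proof.
  split.
  - exists (Ch (Rabs d)). eapply is_series_ext_R; [|apply (proj1 (is_series_ncoef _))].
    intros k. symmetry. apply (proj1 (Rabs_ncoef d k)).
  - exists (Sh (Rabs d)). eapply is_series_ext_R; [|apply (proj2 (is_series_ncoef _))].
    intros k. symmetry. apply (proj2 (Rabs_ncoef d k)).
Qed.

Definition exp_term (u : R) (k : nat) : R := u ^ k / INR (fact k).

Lemma exp_term_S (u : R) (k : nat) : INR (S k) * exp_term u (S k) = u * exp_term u k.
Proof.
  unfold exp_term. rewrite fact_simpl, mult_INR. simpl pow. field.
  split; [apply INR_fact_neq_0 | apply not_0_INR; lia].
Qed.

Definition cauchy_prod (g h : nat -> R) (n : nat) : R :=
  sum_f_R0 (fun k => g k * h (n - k)%nat) n.

Lemma is_series_cauchy_prod_exp (u : R) (h : nat -> R) (l : R) :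
  is_series h l -> ex_series (fun k => Rabs (h k)) ->
  is_series (cauchy_prod (exp_term u) h) (exp u * l).
Proof.
  intros Hh Habs. apply is_series_mult; [apply is_series_exp | exact Hh | | exact Habs].
  apply (ex_series_Rabs_pow_div_fact u (fun k => k)). intros; lia.
Qed.

Lemma sum_f_R0_shift (f : nat -> R) (n : nat) :
  sum_f_R0 f (S n) = f 0%nat + sum_f_R0 (fun k => f (S k)) n.
Proof. induction n; [simpl; ring|]. rewrite tech5, IHn, tech5. ring. Qed.

(* The coefficientwise form of the Leibniz rule [(g h)' = g' h + g h'] for power series. *)
Lemma cauchy_prod_S (g h h' : nat -> R) (u : R) (n : nat) :
  (forall k, INR (S k) * g (S k) = u * g k) ->
  (forall j, INR (S j) * h (S j) = h' j) ->
  INR (S n) * cauchy_prod g h (S n) = u * cauchy_prod g h n + cauchy_prod g h' n.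
Proof.
  intros Hg Hh. unfold cauchy_prod. rewrite scal_sum.
  rewrite (sum_eq _ (fun k => INR k * (g k * h (S n - k)%nat)
                             + INR (S n - k) * (g k * h (S n - k)%nat))).
  2: { intros i Hi. rewrite minus_INR by exact Hi. ring. }
  rewrite plus_sum. f_equal.
  - rewrite sum_f_R0_shift. simpl INR at 1. rewrite Rmult_0_l, Rplus_0_l, scal_sum.
    apply sum_eq. intros i Hi. replace (S n - S i)%nat with (n - i)%nat by lia.
    transitivity (INR (S i) * g (S i) * h (n - i)%nat); [ring|]. rewrite Hg. ring.
  - rewrite tech5, Nat.sub_diag. simpl INR at 2. rewrite Rmult_0_l, Rplus_0_r.
    apply sum_eq. intros i Hi. replace (S n - i)%nat with (S (n - i)) by lia.
    rewrite <- Hh. ring.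
Qed.

(* [lincomb_IN x y p q r] is [x I + y N] for the traceless [N = [[p, q], [r, - p]]],
   whose square is [(p ^ 2 + q r) I]. *)
Definition lincomb_IN (x y p q r : R) : Mat2 := mk2 (x + y * p) (y * q) (y * r) (x - y * p).

(* [(u I + N) ^ n / n! = bcoef_I u d n * I + bcoef_N u d n * N] when [N ^ 2 = d I]. *)
Definition bcoef_I (u d : R) : nat -> R := cauchy_prod (exp_term u) (ncoef_I d).
Definition bcoef_N (u d : R) : nat -> R := cauchy_prod (exp_term u) (ncoef_N d).

Lemma bcoef_I_S (u d : R) (n : nat) :
  INR (S n) * bcoef_I u d (S n) = u * bcoef_I u d n + d * bcoef_N u d n.
Proof.
  unfold bcoef_I, bcoef_N.
  rewrite (cauchy_prod_S _ _ (fun j => d * ncoef_N d j) u n); [|apply exp_term_S | apply ncoef_I_S].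
  f_equal. unfold cauchy_prod. rewrite scal_sum. apply sum_eq. intros; ring.
Qed.

Lemma bcoef_N_S (u d : R) (n : nat) :
  INR (S n) * bcoef_N u d (S n) = bcoef_I u d n + u * bcoef_N u d n.
Proof.
  unfold bcoef_I, bcoef_N.
  rewrite (cauchy_prod_S _ _ (ncoef_I d) u n); [ring | apply exp_term_S | apply ncoef_N_S].
Qed.

Section ExpScalarPlusTraceless.

Variables u p q r : R.

Let d := p ^ 2 + q * r.

Lemma mpow_lincomb_IN (n : nat) :
  mpow (lincomb_IN u 1 p q r) n =
  lincomb_IN (INR (fact n) * bcoef_I u d n) (INR (fact n) * bcoef_N u d n) p q r.
Proof.
  induction n as [|n IH].
  - unfold bcoef_I, bcoef_N, cauchy_prod, exp_term, ncoef_I, ncoef_N, lincomb_IN.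
    simpl. unfold mI. f_equal; field.
  - rewrite fact_simpl, mult_INR, (Rmult_comm (INR (S n))), !Rmult_assoc, bcoef_I_S, bcoef_N_S.
    cbn [mpow]. rewrite IH. unfold lincomb_IN, mmul, d. cbn [e11 e12 e21 e22]. f_equal; ring.
Qed.

Lemma exp_partial_lincomb_IN_limit (f : Mat2 -> R) (s t l : R) :
  (forall x y, f (lincomb_IN x y p q r) = x * s + y * t) ->
  Un_cv (exp_partial f (lincomb_IN u 1 p q r)) l ->
  l = exp u * Ch d * s + exp u * Sh d * t.
Proof.
  intros Hf Hl.
  assert (H : is_series (fun k => bcoef_I u d k * s + bcoef_N u d k * t)
                        (exp u * Ch d * s + exp u * Sh d * t)).
  { apply (@is_series_plus R_AbsRing R_NormedModule
             (fun k => bcoef_I u d k * s) (fun k => bcoef_N u d k * t));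
      apply is_series_scal_r, is_series_cauchy_prod_exp.
    - apply (proj1 (is_series_ncoef d)).
    - apply (proj1 (ex_series_Rabs_ncoef d)).
    - apply (proj2 (is_series_ncoef d)).
    - apply (proj2 (ex_series_Rabs_ncoef d)). }
  apply is_series_Reals in H.
  apply (UL_sequence _ _ _ Hl). revert H. apply Un_cv_ext. intros n.
  unfold exp_partial. apply sum_eq. intros k _.
  rewrite mpow_lincomb_IN, Hf. field. apply INR_fact_neq_0.
Qed.

Lemma is_mexp_lincomb_IN (E : Mat2) :
  is_mexp (lincomb_IN u 1 p q r) E -> E = lincomb_IN (exp u * Ch d) (exp u * Sh d) p q r.
Proof.
  intros (H11 & H12 & H21 & H22). destruct E as [x11 x12 x21 x22]; cbn [e11 e12 e21 e22] in *.
  rewrite (exp_partial_lincomb_IN_limit e11 1 p x11), (exp_partial_lincomb_IN_limit e12 0 q x12),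
    (exp_partial_lincomb_IN_limit e21 0 r x21), (exp_partial_lincomb_IN_limit e22 1 (- p) x22);
    try (intros; cbn; ring); auto.
  unfold lincomb_IN. f_equal; ring.
Qed.

End ExpScalarPlusTraceless.

Lemma charpoly_coeffs (M : Mat2) (alpha beta : R) :
  (forall l, charpoly M l = l ^ 2 + alpha * l + beta) ->
  alpha = - (e11 M + e22 M) /\ beta = det2 M.
Proof.
  intros H. pose proof (H 0) as H0. pose proof (H 1) as H1.
  unfold charpoly, det2 in *. cbn [e11 e12 e21 e22] in *. split; nra.
Qed.

Lemma real_root_sqr_lt_1 (T D x : R) :
  -1 < D < 1 -> Rabs T < 1 + D -> x ^ 2 - T * x + D = 0 -> x ^ 2 < 1.
Proof.
  intros HD HT Hx. apply Rabs_def2 in HT.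
  destruct (Rle_dec 1 x); [|destruct (Rle_dec x (-1))]; nra.
Qed.

(* Jury's stability criterion for [z ^ 2 - T z + D]. *)
Lemma eigenvalue_Cmod_lt_1 (M : Mat2) (z : Cplx) :
  -1 < det2 M < 1 -> Rabs (e11 M + e22 M) < 1 + det2 M -> eigenvalue M z -> Cmod z < 1.
Proof.
  destruct z as [x y]. unfold eigenvalue, det2, Cmod, Csub, Cadd, Copp, Cmul, RtoC.
  cbn [fst snd]. intros HD HT Hz. injection Hz as Hre Him.
  rewrite <- sqrt_1. apply sqrt_lt_1_alt. split; [nra|].
  destruct (Req_dec y 0) as [->|Hy].
  - enough (x ^ 2 < 1) by nra.
    apply (real_root_sqr_lt_1 (e11 M + e22 M) (e11 M * e22 M - e12 M * e21 M)); auto. nra.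
  - assert (Hx : 2 * x = e11 M + e22 M) by (apply (Rmult_eq_reg_l y); [nra | exact Hy]).
    nra.
Qed.

Lemma trace_det_exp_product (a b c : R) (E1 E2 : Mat2) :
  is_mexp (mk2 (- a) (- b) c 0) E1 -> is_mexp (mk2 (- a) b (- c) 0) E2 ->
  e11 (mmul E2 E1) + e22 (mmul E2 E1) = exp (- a) * (2 + a ^ 2 * Sh (a ^ 2 / 4 - b * c) ^ 2) /\
  det2 (mmul E2 E1) = exp (- (2 * a)).
Proof.
  intros H1 H2.
  replace (mk2 (- a) (- b) c 0) with (lincomb_IN (- a / 2) 1 (- a / 2) (- b) c) in H1
    by (unfold lincomb_IN; f_equal; field).
  replace (mk2 (- a) b (- c) 0) with (lincomb_IN (- a / 2) 1 (- a / 2) b (- c)) in H2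
    by (unfold lincomb_IN; f_equal; field).
  apply is_mexp_lincomb_IN in H1, H2.
  set (d := a ^ 2 / 4 - b * c).
  replace ((- a / 2) ^ 2 + - b * c) with d in H1 by (unfold d; field).
  replace ((- a / 2) ^ 2 + b * - c) with d in H2 by (unfold d; field).
  assert (He : exp (- a / 2) ^ 2 = exp (- a))
    by (simpl; rewrite Rmult_1_r, <- exp_plus; f_equal; field).
  assert (He2 : exp (- (2 * a)) = exp (- a) ^ 2)
    by (simpl; rewrite Rmult_1_r, <- exp_plus; f_equal; ring).
  pose proof (Ch_Sh_id d) as Hid.
  subst E1 E2. unfold det2, mmul, lincomb_IN. cbn [e11 e12 e21 e22]. rewrite He2, <- He. split.
  - transitivity (exp (- a / 2) ^ 2 * (2 * (Ch d ^ 2 - d * Sh d ^ 2) + a ^ 2 * Sh d ^ 2));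
      [unfold d; field | rewrite Hid; ring].
  - transitivity ((exp (- a / 2) ^ 2) ^ 2 * (Ch d ^ 2 - d * Sh d ^ 2) ^ 2);
      [unfold d; field | rewrite Hid; ring].
Qed.

Lemma trace_lt_1_add_det (a d : R) :
  0 < a -> d < a ^ 2 / 4 -> exp (- a) * (2 + a ^ 2 * Sh d ^ 2) < 1 + exp (- (2 * a)).
Proof.
  intros Ha Hd.
  assert (HSh : Sh d ^ 2 < Sh ((a / 2) ^ 2) ^ 2) by (apply Sh_sqr_lt; nra).
  pose proof (exp_add_opp_sub_2 a) as Hexp.
  assert (Hinv : exp (- a) * exp a = 1) by (rewrite <- exp_plus, Rplus_opp_l; apply exp_0).
  assert (He2 : exp (- (2 * a)) = exp (- a) * exp (- a)) by (rewrite <- exp_plus; f_equal; ring).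
  assert (Hlt : a ^ 2 * Sh d ^ 2 < exp a + exp (- a) - 2)
    by (rewrite Hexp; apply Rmult_lt_compat_l; nra).
  rewrite He2. pose proof (exp_pos (- a)). nra.
Qed.

Lemma Sh_sqr (v : R) : v <> 0 -> Sh (v ^ 2) = (exp v - exp (- v)) / (2 * v).
Proof. intros Hv. rewrite exp_Ch_Sh, exp_opp_Ch_Sh. field. exact Hv. Qed.

Lemma Sh_opp_sqr (w : R) : w <> 0 -> Sh (- w ^ 2) = sin w / w.
Proof. intros Hw. rewrite sin_Sh. field. exact Hw. Qed.

Lemma alpha_formula_Csqrt_real (a d : R) :
  Csqrt_real (4 * d) <> (0, 0) ->
  alpha_formula a (Csqrt_real (4 * d)) = RtoC (- (exp (- a) * (2 + a ^ 2 * Sh d ^ 2))).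
Proof.
  unfold Csqrt_real. destruct (Rle_dec 0 (4 * d)) as [Hd|Hd]; intros Hne.
  - assert (Hv : sqrt d * sqrt d = d) by (apply sqrt_sqrt; lra).
    assert (Hsq : sqrt (4 * d) = 2 * sqrt d)
      by (rewrite sqrt_mult by lra; replace 4 with (2 * 2) by ring;
          rewrite sqrt_square by lra; ring).
    rewrite Hsq in *. set (v := sqrt d) in *.
    assert (Hv0 : v <> 0) by (intros H0; apply Hne; rewrite H0; f_equal; ring).
    replace d with (v ^ 2) by (simpl; lra). rewrite Sh_sqr by exact Hv0.
    assert (X1 : exp (2 * v) = exp v * exp v) by (rewrite <- exp_plus; f_equal; ring).
    assert (X2 : exp (- (2 * v)) = exp (- v) * exp (- v)) by (rewrite <- exp_plus; f_equal; ring).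
    pose proof (exp_pos v).
    unfold alpha_formula, RtoC, Cmul, Cadd, Cinv, Cexp, Copp. cbn [fst snd].
    rewrite Ropp_0, cos_0, sin_0, X1, X2, (exp_Ropp v). f_equal; field; lra.
  - assert (Hw : sqrt (- d) * sqrt (- d) = - d) by (apply sqrt_sqrt; lra).
    assert (Hsq : sqrt (- (4 * d)) = 2 * sqrt (- d)).
    { replace (- (4 * d)) with (2 * 2 * - d) by ring.
      rewrite sqrt_mult, sqrt_square by lra; reflexivity. }
    rewrite Hsq in *. set (w := sqrt (- d)) in *.
    assert (Hw0 : 0 < w) by (apply sqrt_lt_R0; lra).
    replace d with (- w ^ 2) by (simpl; lra). rewrite Sh_opp_sqr by lra.
    unfold alpha_formula, RtoC, Cmul, Cadd, Cinv, Cexp, Copp. cbn [fst snd].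
    rewrite Ropp_0, exp_0, cos_neg, sin_neg, cos_2a_sin. f_equal; field; lra.
Qed.

Theorem mainTheorem2 (a b c : R) (ha : 0 < a) (hb : 0 < b) (hc : 0 < c)
  (E1 E2 : Mat2)
  (hE1 : is_mexp (mk2 (- a) (- b) c 0) E1)
  (hE2 : is_mexp (mk2 (- a) b (- c) 0) E2)
  (alpha beta : R)
  (hchar : forall l : R, charpoly (mmul E2 E1) l = l ^ 2 + alpha * l + beta) :
  beta = exp (- (2 * a)) /\
  (Csqrt_real (a ^ 2 - 4 * b * c) <> (0, 0) ->
     RtoC alpha = alpha_formula a (Csqrt_real (a ^ 2 - 4 * b * c))) /\
  (forall z : Cplx, eigenvalue (mmul E2 E1) z -> Cmod z < 1).
Proof.
  destruct (trace_det_exp_product a b c E1 E2 hE1 hE2) as [Htr Hdet].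
  destruct (charpoly_coeffs _ _ _ hchar) as [Halpha Hbeta].
  replace (a ^ 2 - 4 * b * c) with (4 * (a ^ 2 / 4 - b * c)) by field.
  split; [|split].
  - rewrite Hbeta, Hdet. reflexivity.
  - intros Hne. rewrite alpha_formula_Csqrt_real, Halpha, Htr by exact Hne. reflexivity.
  - intros z. apply eigenvalue_Cmod_lt_1; rewrite Hdet.
    + assert (exp (- (2 * a)) < 1) by (rewrite <- exp_0; apply exp_increasing; lra).
      pose proof (exp_pos (- (2 * a))). lra.
    + rewrite Htr, Rabs_right.
      * apply trace_lt_1_add_det; nra.
      * apply Rle_ge, Rmult_le_pos; [apply Rlt_le, exp_pos | nra].
Qed.
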